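(* For every odd integer $q>1$ there exists a $q$-ary $2$-frameproof code of length $4$ and cardinality $2(q-1)^2+1$.
   Context: For $P\subseteq F^l$ over a finite alphabet $F$, $desc(P)=\{x\in F^l: \text{for every } i\in\{1,\ldots,l\} \text{ there is } y\in P \text{ with } x_i=y_i\}$. For an integer $c\geq 2$, a $c$-frameproof code of length $l$ is a subset $C\subseteq F^l$ with $desc(P)\cap C=P$ for every $P\subseteq C$ with $|P|\leq c$; it is $q$-ary if $|F|=q$. *)

From mathcomp Require Import all_boot.
Set Implicit Arguments. Unset Strict Implicit. Unset Printing Implicit Defensive.

Definition word (F : finType) (l : nat) := {ffun 'I_l -> F}.

Definition desc (F : finType) (l : nat) (P : {set word F l}) : {set word F l} :=
  [set x : word F l | [forall i : 'I_l, [exists y in P, x i == y i]]].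

Definition frameproof (F : finType) (l c : nat) (C : {set word F l}) : Prop :=
  forall P : {set word F l}, P \subset C -> #|P| <= c -> desc P :&: C = P.

From mathcomp Require Import all_boot zify.
Set Implicit Arguments. Unset Strict Implicit. Unset Printing Implicit Defensive.

(* Write q = 2m + 1 and read a nonzero symbol as a pair (bit, residue mod m).
   Besides the zero word, the code has the words with a single zero, at some
   position v, whose three other positions carry the residues a, b, a + b of
   (a, b) in (Z/m)^2 together with bits s (+) flip v i; this gives
   1 + 4 * 2 * m^2 = 2 (q - 1)^2 + 1 words.  Every codeword x then agrees with
   any other codeword in at most one of the three positions D outside its own
   zero position: for the same zero position, two residues determine (a, b)
   and one bit determines s; for different zero positions v, w the position w
   disagrees, and flip is chosen so that the bits cannot agree on both
   positions outside {v, w}.  A 2-frameproof code follows by counting: two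
   codewords cover at most two positions of D. *)

Lemma leq_card_bigcup (I T : finType) (P : {pred I}) (A : I -> {set T}) :
  #|\bigcup_(i in P) A i| <= \sum_(i in P) #|A i|.
Proof.
elim/big_rec2: _ => [|i n U _ leUn]; first by rewrite cards0.
by rewrite (leq_trans (leq_card_setU _ _).1) ?leq_add2l.
Qed.

Definition agree (F : finType) (l : nat) (x y : word F l) : {set 'I_l} :=
  [set i | x i == y i].

Lemma frameproof_of_agree_bound (F : finType) (l c t : nat) (C : {set word F l}) :
  (forall x, x \in C -> exists2 D : {set 'I_l}, c * t < #|D| &
     forall y, y \in C -> y != x -> #|agree x y :&: D| <= t) ->
  frameproof c C.
Proof.
move=> bound P PC Pc; apply/setP => x; rewrite inE.
apply/andP/idP => [[xP xC]|xP]; last first.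
  split; last exact: (subsetP PC).
  by rewrite inE; apply/forallP => i; apply/existsP; exists x; rewrite xP /=.
apply/contraT => xNP; have [D ctD agreeD] := bound x xC.
pose U := \bigcup_(y in P) (agree x y :&: D).
have U_small : #|U| < #|D|.
  apply: leq_ltn_trans (leq_card_bigcup _ _) (leq_ltn_trans _ ctD).
  apply: (@leq_trans (\sum_(y in P) t)).
    apply: leq_sum => y yP; apply: agreeD; first exact: (subsetP PC).
    by apply: contraNneq xNP => <-.
  by rewrite sum_nat_const leq_mul2r Pc orbT.
have /subsetPn [i iD iNU] : ~~ (D \subset U).
  by apply: contraTN U_small => /subset_leq_card; rewrite leqNgt.
move: xP; rewrite inE => /forallP/(_ i)/existsP [y /andP [yP xy]].
by case/negP: iNU; apply/bigcupP; exists y; rewrite // !inE xy.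
Qed.

Definition flip (v i : 'I_4) : bool :=
  match nat_of_ord v, nat_of_ord i with 1, 3 | 2, 1 | 3, 2 => true | _, _ => false end.

Lemma flip_separates (v w i j : 'I_4) : v != w -> i != v -> i != w ->
  j != v -> j != w -> i != j -> flip v i (+) flip w i != flip v j (+) flip w j.
Proof.
by case: v w i j => [[|[|[|[|?]]]] ?] [[|[|[|[|?]]]] ?] [[|[|[|[|?]]]] ?]
  [[|[|[|[|?]]]] ?].
Qed.

Definition rank (v i : 'I_4) : nat := if i < v then nat_of_ord i else i.-1.

Lemma rank_lt3 (v i : 'I_4) : i != v -> rank v i < 3.
Proof. by case: v i => [[|[|[|[|?]]]] ?] [[|[|[|[|?]]]] ?]. Qed.

Lemma rank_inj (v i j : 'I_4) : i != v -> j != v -> i != j -> rank v i != rank v j.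
Proof.
by case: v i j => [[|[|[|[|?]]]] ?] [[|[|[|[|?]]]] ?] [[|[|[|[|?]]]] ?].
Qed.

Section Construction.

Variable m : nat.

Definition residue (a b k : nat) : nat :=
  match k with 0 => a | 1 => b | _ => (a + b) %% m end.

Lemma residue_lt a b k : a < m -> b < m -> residue a b k < m.
Proof. by move=> am bm; case: k => [|[|k]] //=; rewrite ltn_mod (leq_ltn_trans _ am). Qed.

Lemma residue_inj a b a' b' k k' : a < m -> b < m -> a' < m -> b' < m ->
  k < 3 -> k' < 3 -> k != k' ->
  residue a b k = residue a' b' k -> residue a b k' = residue a' b' k' ->
  a = a' /\ b = b'.
Proof.
move=> am bm a'm b'm.
have modDl_inj d e e' : e < m -> e' < m -> (d + e) %% m = (d + e') %% m -> e = e'.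
  by move=> em e'm /eqP; rewrite eqn_modDl !modn_small // => /eqP.
have eq_b d : (d + b) %% m = (d + b') %% m -> b = b' by apply: modDl_inj.
have eq_a d : (a + d) %% m = (a' + d) %% m -> a = a'.
  by rewrite ![_ + d]addnC; apply: modDl_inj.
case: k k' => [|[|[|?]]] [|[|[|?]]] //= _ _ _.
- by move=> ea; rewrite ea => /eq_b ->.
- by move=> eb; rewrite eb => /eq_a ->.
- by move=> e ea; move: e; rewrite ea => /eq_b ->.
- by move=> e eb; move: e; rewrite eb => /eq_a ->.
Qed.

Definition symbol (s : bool) (r : nat) : nat := (r + s * m).+1.

Lemma symbol_lt s r : r < m -> symbol s r < (m.*2).+1.
Proof. by rewrite /symbol -mul2n; case: s => /=; lia. Qed.

Lemma symbol_inj s s' r r' : r < m -> r' < m ->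
  symbol s r = symbol s' r' -> s = s' /\ r = r'.
Proof. by rewrite /symbol; case: s s' => [] [] /=; lia. Qed.

Definition param := option ('I_4 * bool * 'I_m * 'I_m).

Definition zero_pos (p : param) : 'I_4 := if p is Some (v, _, _, _) then v else ord0.

Definition coord (p : param) (i : 'I_4) : nat :=
  if p is Some (v, s, a, b) then
    if i == v then 0 else symbol (s (+) flip v i) (residue a b (rank v i))
  else 0.

Definition codeword (p : param) : word 'I_(m.*2).+1 4 := [ffun i => inord (coord p i)].

Lemma coord_lt p i : coord p i < (m.*2).+1.
Proof.
case: p => [[[[v s] a] b]|] //=; case: (i == v) => //.
exact/symbol_lt/residue_lt.
Qed.

Lemma codeword_eqE p p' i : (codeword p i == codeword p' i) = (coord p i == coord p' i).
Proof.
rewrite !ffunE; apply/eqP/eqP => [/(congr1 (@nat_of_ord _))|->] //.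
by rewrite !inordK ?coord_lt.
Qed.

Lemma coord_off v s a b i : i != v ->
  coord (Some (v, s, a, b)) i = symbol (s (+) flip v i) (residue a b (rank v i)).
Proof. by move=> /negbTE /= ->. Qed.

Lemma coord_eq0 v s a b i : (coord (Some (v, s, a, b)) i == 0) = (i == v).
Proof. by rewrite /=; case: (i == v). Qed.

Lemma coord_agree2 (p p' : param) (i j : 'I_4) :
  i != zero_pos p -> j != zero_pos p -> i != j ->
  coord p i = coord p' i -> coord p j = coord p' j -> p = p'.
Proof.
case: p p' => [[[[v s] a] b]|] [[[[w s'] a'] b']|] // iv jv ij;
  rewrite ?[coord None _]/= => ei ej; first last.
- move/esym/eqP: ei; move/esym/eqP: ej; rewrite !coord_eq0 => /eqP jw /eqP iw.
  by rewrite iw jw eqxx in ij.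
- by move/eqP: ei; rewrite coord_eq0 (negbTE iv).
rewrite /= in iv jv.
have iw : i != w by rewrite -(coord_eq0 w s' a' b') -ei coord_eq0.
have jw : j != w by rewrite -(coord_eq0 w s' a' b') -ej coord_eq0.
move: ei ej; rewrite !coord_off //.
have res_lt c d k : residue (@nat_of_ord m c) (@nat_of_ord m d) k < m.
  exact: residue_lt.
move=> /(symbol_inj (res_lt _ _ _) (res_lt _ _ _)) [si ri].
move=> /(symbol_inj (res_lt _ _ _) (res_lt _ _ _)) [sj rj].
have [vw|vw] := eqVneq v w.
  subst w; have [/val_inj <- /val_inj <-] := residue_inj (ltn_ord a) (ltn_ord b)
    (ltn_ord a') (ltn_ord b') (rank_lt3 iv) (rank_lt3 jv) (rank_inj iv jv ij) ri rj.
  by move: si; rewrite -!(addbC (flip v i)) => /addbI ss'; rewrite ss'.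
have := flip_separates vw iv iw jv jw ij.
by move: si sj; case: s s' (flip v i) (flip w i) (flip v j) (flip w j) => [] [] [] [] [] [].
Qed.

Lemma card_agree_le1 p p' : p != p' ->
  #|agree (codeword p) (codeword p') :&: [set~ zero_pos p]| <= 1.
Proof.
move=> pp'; apply/card_le1_eqP => i j; rewrite !inE !codeword_eqE.
move=> /andP [/eqP ei iv] /andP [/eqP ej jv]; apply/eqP.
apply: contraNT pp' => ij; apply/eqP; exact: coord_agree2 jv iv ij ej ei.
Qed.

Lemma codeword_inj : injective codeword.
Proof.
move=> p p' eq_pp'; apply/eqP/contraT => /card_agree_le1.
rewrite eq_pp'; have -> : agree (codeword p') (codeword p') = setT.
  by apply/setP => i; rewrite !inE eqxx.
by rewrite setTI cardsC1 card_ord.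
Qed.

Lemma codeword_frameproof : frameproof 2 [set codeword p | p : param].
Proof.
apply: (@frameproof_of_agree_bound _ _ _ 1) => _ /imsetP [p _ ->].
exists [set~ zero_pos p]; first by rewrite cardsC1 card_ord.
move=> _ /imsetP [p' _ ->] neq; apply: card_agree_le1.
by apply: contraNneq neq => ->; rewrite eqxx.
Qed.

Lemma card_codewords : #|[set codeword p | p : param]| = 1 + 4 * 2 * m * m.
Proof.
by rewrite card_imset ?card_option ?card_prod ?card_ord ?card_bool //; apply: codeword_inj.
Qed.

End Construction.

Theorem theorem2 (q : nat) : odd q -> 1 < q ->
  exists C : {set word 'I_q 4},
    frameproof 2 C /\ #|C| = 2 * (q - 1) ^ 2 + 1.
Proof.
move=> q_odd _.
have [m ->] : exists m, q = m.*2.+1.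
  by exists q./2; rewrite -[LHS](odd_double_half q) q_odd add1n.
exists [set codeword p | p : param m]; split; first exact: codeword_frameproof.
by rewrite card_codewords subn1 /= -mul2n; lia.
Qed.
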